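(* Let $V=\{v_1,\dots,v_m\}\subset\mathbb{R}^n$. For any $w\in\mathbb{R}^m_{>0}$ we have $\mathrm{NC}(f_{V,\mathbf{1}_m})=\mathrm{NC}(f_{V,w})$. Moreover, the covector decomposition of $H=\{x\in\mathbb{R}^n:\sum_j x_j=0\}$ induced by $V$ agrees with $\overline{\mathrm{NC}}(f_{V,w})$ for any $w\in\mathbb{R}^m_{>0}$.
   Context: Write $v_i=(v_{i1},\dots,v_{in})$ and $f_{V,w}(x)=\sum_{i=1}^m w_i\max_{j\in[n]}(x_j-v_{ij})$, viewed as the tropical signomial $\max_{(j_1,\dots,j_m)\in[n]^m}\sum_i w_i(x_{j_i}-v_{ij_i})$ with terms of equal exponent combined (largest coefficient kept); $f_{V,\mathbf{1}_m}$ is the case of all weights $1$. For a tropical signomial $f(x)=\max_{a\in A}(c_a+a\cdot x)$ with distinct exponents, let $B(x)=\{a: c_a+a\cdot x=f(x)\}$; the normal complex $\mathrm{NC}(f)$ is the polyhedral complex of sets $\{y\in\mathbb{R}^n: B(x)\subseteq B(y)\}$, $x\in\mathbb{R}^n$ (the projections of the faces of the epigraph of $f$), and $\overline{\mathrm{NC}}(f)$ is the complex of their intersections with $H$. Covector decomposition: for $x$ and $i$ let $S_i(x)=\operatorname{argmax}_j(x_j-v_{ij})$; for a tuple $S=(S_1,\dots,S_m)$ of nonempty subsets of $[n]$ let $C_S=\{x\in H: S_i\subseteq S_i(x)\ \forall i\}$; the covector decomposition is the polyhedral complex of nonempty $C_S$ (the subdivision induced by the max-tropical hyperplanes centered at the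 $v_i$). *)

From HB Require Import structures.
From mathcomp Require Import all_boot all_order all_algebra.
Set Implicit Arguments. Unset Strict Implicit. Unset Printing Implicit Defensive.
Import Order.TTheory GRing.Theory Num.Theory.
Local Open Scope ring_scope.

Section Tropical.
Variable R : realFieldType.
Variable n : nat.

Definition pset := 'rV[R]_n -> Prop.

Definition dotv (a x : 'rV[R]_n) : R := \sum_(j < n) a 0 j * x 0 j.

Definition seqmax (s : seq R) : R := foldr Num.max (head 0 s) s.

(* A tropical signomial given by a finite family of terms (c t) + (e t).x,
   terms with equal exponent being combined by keeping the largest coefficient. *)
Variable T : finType.
Variable c : T -> R.
Variable e : T -> 'rV[R]_n.

Definition texps : seq 'rV[R]_n := undup [seq e t | t <- enum T].
Definition tcoef (a : 'rV[R]_n) : R := seqmax [seq c t | t <- enum T & e t == a].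
Definition tval (x : 'rV[R]_n) : R := seqmax [seq tcoef a + dotv a x | a <- texps].
Definition Bset (x : 'rV[R]_n) : seq 'rV[R]_n :=
  [seq a <- texps | tcoef a + dotv a x == tval x].
Definition NCcell (x : 'rV[R]_n) : pset := fun y => {subset Bset x <= Bset y}.
Definition NC : pset -> Prop := fun C => exists x, C = NCcell x.
End Tropical.

Definition Hyp (R : realFieldType) (n : nat) : pset R n :=
  fun x => \sum_(j < n) x 0 j = 0.

Definition NCbar (R : realFieldType) (n : nat) (T : finType)
  (c : T -> R) (e : T -> 'rV[R]_n) : pset R n -> Prop :=
  fun D => exists C, NC c e C /\ D = (fun x => C x /\ Hyp x).

(* f_{V,w}: terms indexed by tuples (j_1,...,j_m) in [n]^m *)
Section FVw.
Variables (R : realFieldType) (m n : nat) (V : 'M[R]_(m, n)) (w : 'I_m -> R).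
Definition fVw_coef (t : {ffun 'I_m -> 'I_n}) : R := - \sum_(i < m) w i * V i (t i).
Definition fVw_exp (t : {ffun 'I_m -> 'I_n}) : 'rV[R]_n :=
  \row_(j < n) \sum_(i < m | t i == j) w i.
End FVw.

Definition argmaxset (R : realFieldType) (m n : nat) (V : 'M[R]_(m, n))
  (x : 'rV[R]_n) (i : 'I_m) : {set 'I_n} :=
  [set j | [forall k, x 0 k - V i k <= x 0 j - V i j]].

Definition covcell (R : realFieldType) (m n : nat) (V : 'M[R]_(m, n))
  (S : {ffun 'I_m -> {set 'I_n}}) : pset R n :=
  fun x => Hyp x /\ forall i, S i \subset argmaxset V x i.

Definition covdec (R : realFieldType) (m n : nat) (V : 'M[R]_(m, n)) : pset R n -> Prop :=
  fun C => exists S : {ffun 'I_m -> {set 'I_n}},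
    (forall i, S i != set0) /\ (exists x, covcell V S x) /\ C = covcell V S.

From Pilot Require Import Defs.
From HB Require Import structures.
From mathcomp Require Import all_boot all_order all_algebra lra.
From Stdlib Require Import Classical FunctionalExtensionality PropExtensionality Wf_nat.
Set Implicit Arguments. Unset Strict Implicit. Unset Printing Implicit Defensive.
Import Order.TTheory GRing.Theory Num.Theory.
Local Open Scope ring_scope.

(* The term of f_{V,w} indexed by t : [m] -> [n] has value
   sum_i w_i (x_{t i} - v_{i, t i}); as every w_i > 0, it attains f_{V,w}(x)
   exactly when t i lies in S_i(x) for all i.  Hence the cell of x in NC(f_{V,w})
   is {y | S_i(x) ⊆ S_i(y) for all i}, whatever w is.  Conversely, the argmax sets
   at the midpoint of two points of a covector cell C_S (all S_i nonempty) are the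
   intersections of theirs, so a point of C_S minimising sum_i |S_i(x)| has argmax
   sets contained in those of every point of C_S: C_S is the cell of that point
   cut with H. *)

Lemma ex_minimizer (A : Type) (P : A -> Prop) (f : A -> nat) :
  (exists a, P a) -> exists2 a, P a & forall b, P b -> (f a <= f b)%N.
Proof.
case=> a0 Pa0.
have [k [[[a Pa <-] least] _]] := @dec_inh_nat_subset_has_unique_least_element
  (fun k => exists2 a, P a & f a = k) (fun k => classic _)
  (ex_intro _ _ (ex_intro2 _ _ a0 Pa0 erefl)).
by exists a => // b Pb; apply/ssrnat.leP; apply: least; exists b.
Qed.

Lemma seqmax_ge (R : realFieldType) (s : seq R) y : y \in s -> y <= seqmax s.
Proof.
rewrite /seqmax; elim: s (head 0 s) => // a s IH d.
by rewrite in_cons /= le_max => /orP[/eqP->|/IH ->]; rewrite ?lexx ?orbT.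
Qed.

Lemma seqmax_in (R : realFieldType) (s : seq R) y : y \in s -> seqmax s \in s.
Proof.
case: s => // a s _; rewrite /seqmax /=.
have: foldr Num.max a s \in a :: s.
  elim: s => [|b s IH] /=; first by rewrite mem_head.
  rewrite maxElt !in_cons; case: ifP => _; last by rewrite eqxx orbT.
  by move: IH; rewrite in_cons => /orP[->|->]; rewrite ?orbT.
by rewrite maxElt; case: ifP => _; rewrite ?mem_head.
Qed.

Section TropicalSignomial.
Variables (R : realFieldType) (n : nat) (T : finType) (c : T -> R) (e : T -> 'rV[R]_n).

Definition tterm (t : T) (x : 'rV[R]_n) : R := c t + dotv (e t) x.

Lemma mem_texps t : e t \in texps e.
Proof. by rewrite mem_undup map_f ?mem_enum. Qed.

Lemma tcoef_ge t : c t <= tcoef c e (e t).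
Proof. by apply: seqmax_ge; rewrite map_f // mem_filter eqxx mem_enum. Qed.

Lemma tcoef_attained a : a \in texps e -> exists2 t, e t = a & c t = tcoef c e a.
Proof.
rewrite mem_undup => /mapP[t0 _ ->].
have : tcoef c e (e t0) \in [seq c t | t <- enum T & e t == e t0].
  by apply: (seqmax_in (y := c t0)); rewrite map_f // mem_filter eqxx mem_enum.
by case/mapP => t; rewrite mem_filter => /andP[/eqP Ht _] ->; exists t.
Qed.

Lemma tterm_le_tval t x : tterm t x <= Defs.tval c e x.
Proof.
apply: le_trans (seqmax_ge (map_f _ (mem_texps t))).
by rewrite /tterm lerD2r tcoef_ge.
Qed.

Lemma tval_attained (t0 : T) x : exists t, tterm t x = Defs.tval c e x.
Proof.
have : Defs.tval c e x \in [seq tcoef c e a + dotv a x | a <- texps e].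
  exact: seqmax_in (map_f _ (mem_texps t0)).
case/mapP => a /tcoef_attained[t <- <-] ->; by exists t.
Qed.

Lemma mem_Bset x a :
  a \in Bset c e x <-> exists2 t, e t = a & tterm t x = Defs.tval c e x.
Proof.
rewrite mem_filter; split.
  by case/andP => /eqP Ha /tcoef_attained[t Ht Hc]; exists t => //; rewrite /tterm Ht Hc.
case=> t <- Ht; rewrite mem_texps andbT eq_le seqmax_ge ?(map_f _ (mem_texps t)) //=.
by rewrite -Ht /tterm lerD2r tcoef_ge.
Qed.

Lemma tterm_eq_tval t x :
  tterm t x = Defs.tval c e x <-> forall t', tterm t' x <= tterm t x.
Proof.
split=> [-> t'|Hmax]; first exact: tterm_le_tval.
have [t' Ht'] := tval_attained t x.
by apply/eqP; rewrite eq_le tterm_le_tval -Ht' Hmax.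
Qed.

Lemma NCcellP x y : NCcell c e x y <->
  forall t, tterm t x = Defs.tval c e x -> tterm t y = Defs.tval c e y.
Proof.
split=> [sub t Htx|Hxy a /mem_Bset[t <- /Hxy Hty]]; last by apply/mem_Bset; exists t.
have /sub /mem_Bset[t' Ht' Ht'y] : e t \in Bset c e x by apply/mem_Bset; exists t.
(* t and t' share their exponent, so they differ by the constant c t - c t'. *)
apply/eqP; rewrite eq_le tterm_le_tval -Ht'y /tterm Ht' lerD2r.
by rewrite -(lerD2r (dotv (e t) x)) -/(tterm t x) Htx -Ht' tterm_le_tval.
Qed.

End TropicalSignomial.

Section FVwNormalComplex.
Variables (R : realFieldType) (m n : nat) (V : 'M[R]_(m, n)).

Lemma argmaxsetP (x : 'rV[R]_n) i j :
  reflect (forall k, x 0 k - V i k <= x 0 j - V i j) (j \in argmaxset V x i).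
Proof. by rewrite inE; apply: forallP. Qed.

Lemma arg_max_argmaxset (j0 : 'I_n) (x : 'rV[R]_n) i :
  [arg max_(j > j0) (x 0 j - V i j)]%O \in argmaxset V x i.
Proof. by case: arg_maxP => // j _ Hj; apply/argmaxsetP => k; apply: Hj. Qed.

Definition argmax_cell (x : 'rV[R]_n) : pset R n :=
  fun y => forall i, argmaxset V x i \subset argmaxset V y i.

Variable w : 'I_m -> R.
Hypothesis w_gt0 : forall i, 0 < w i.

Notation tterm_w := (tterm (fVw_coef V w) (fVw_exp w)).

Lemma tterm_fVw t x : tterm_w t x = \sum_i w i * (x 0 (t i) - V i (t i)).
Proof.
rewrite /tterm /fVw_coef.
have -> : dotv (fVw_exp w t) x = \sum_i w i * x 0 (t i).
  rewrite /dotv.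
  under eq_bigr do rewrite mxE mulr_suml big_mkcond.
  rewrite exchange_big /=; apply: eq_bigr => i _.
  by rewrite -big_mkcond (big_pred1 (t i)) // => j; rewrite eq_sym.
by rewrite addrC -sumrB; apply: eq_bigr => i _; rewrite mulrBr.
Qed.

Lemma tterm_fVw_maxP t x :
  (forall t', tterm_w t' x <= tterm_w t x) <-> forall i, t i \in argmaxset V x i.
Proof.
split=> [Hmax i|Ht t']; last first.
  rewrite !tterm_fVw; apply: ler_sum => i _.
  by apply: ler_wpM2l; [exact: ltW | move/argmaxsetP: (Ht i)].
apply/argmaxsetP => k.
have := Hmax [ffun l => if l == i then k else t l].
rewrite !tterm_fVw (bigD1 i) //= [X in _ <= X](bigD1 i) //= ffunE eqxx.
rewrite (eq_bigr (fun l => w l * (x 0 (t l) - V l (t l)))).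
  by rewrite lerD2r ler_pM2l.
by move=> l /negbTE Hl; rewrite ffunE Hl.
Qed.

Lemma tterm_fVw_eq_tval t x :
  tterm_w t x = Defs.tval (fVw_coef V w) (fVw_exp w) x <->
  forall i, t i \in argmaxset V x i.
Proof. by rewrite tterm_eq_tval tterm_fVw_maxP. Qed.

Lemma NCcell_fVw x : NCcell (fVw_coef V w) (fVw_exp w) x = argmax_cell x.
Proof.
apply: functional_extensionality => y; apply: propositional_extensionality.
rewrite NCcellP; split=> [Hxy i|Hsub t]; last first.
  by rewrite !tterm_fVw_eq_tval => Ht i; apply: subsetP (Hsub i) _ (Ht i).
apply/subsetP => j Hj.
pose t := [ffun k => if k == i then j else [arg max_(l > j) (x 0 l - V k l)]%O].
have /Hxy : tterm_w t x = Defs.tval (fVw_coef V w) (fVw_exp w) x.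
  apply/tterm_fVw_eq_tval => k; rewrite ffunE.
  by case: eqP => [->|_] //; apply: arg_max_argmaxset.
by move/tterm_fVw_eq_tval/(_ i); rewrite ffunE eqxx.
Qed.

Lemma NC_fVw : NC (fVw_coef V w) (fVw_exp w) = fun C => exists x, C = argmax_cell x.
Proof.
apply: functional_extensionality => C; apply: propositional_extensionality.
by split=> -[x ->]; exists x; rewrite NCcell_fVw.
Qed.

End FVwNormalComplex.

Section CovectorCells.
Variables (R : realFieldType) (m n : nat) (V : 'M[R]_(m, n)).

Definition midpoint (x y : 'rV[R]_n) : 'rV[R]_n := 2^-1 *: (x + y).

Lemma Hyp_midpoint x y : Hyp x -> Hyp y -> Hyp (midpoint x y).
Proof.
rewrite /Hyp => Hx Hy; under eq_bigr do rewrite !mxE.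
by rewrite -mulr_sumr big_split /= Hx Hy addr0 mulr0.
Qed.

Lemma argmaxset_midpoint x y i k :
  k \in argmaxset V x i -> k \in argmaxset V y i ->
  argmaxset V (midpoint x y) i = argmaxset V x i :&: argmaxset V y i.
Proof.
move=> /argmaxsetP Hxk /argmaxsetP Hyk; apply/setP => j; rewrite in_setI.
apply/argmaxsetP/andP => [Hz|[/argmaxsetP Hxj /argmaxsetP Hyj] l]; last first.
  by rewrite !mxE; have := Hxj l; have := Hyj l; lra.
(* k maximises both coordinates of the average, so j must maximise both too. *)
have Hzk := Hz k; rewrite !mxE in Hzk.
have Hxj := Hxk j; have Hyj := Hyk j.
by split; apply/argmaxsetP => l; [have := Hxk l | have := Hyk l]; lra.
Qed.

Variable S : {ffun 'I_m -> {set 'I_n}}.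
Hypothesis S_neq0 : forall i, S i != set0.

Lemma covcell_argmaxsetI x y i : covcell V S x -> covcell V S y ->
  argmaxset V (midpoint x y) i = argmaxset V x i :&: argmaxset V y i.
Proof.
case=> _ Sx [_ Sy]; have /set0Pn[k Sk] := S_neq0 i.
exact: argmaxset_midpoint (subsetP (Sx i) _ Sk) (subsetP (Sy i) _ Sk).
Qed.

Lemma covcell_midpoint x y : covcell V S x -> covcell V S y -> covcell V S (midpoint x y).
Proof.
move=> Cx Cy; split; first by apply: Hyp_midpoint; [case: Cx | case: Cy].
move=> i; rewrite covcell_argmaxsetI // subsetI.
by case: Cx => _ ->; case: Cy => _ ->.
Qed.

Definition argmax_weight (x : 'rV[R]_n) : nat := (\sum_i #|argmaxset V x i|)%N.

Lemma covcell_min_weight x : covcell V S x ->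
  (forall y, covcell V S y -> argmax_weight x <= argmax_weight y)%N ->
  forall y, covcell V S y -> argmax_cell V x y.
Proof.
move=> Cx xmin y Cy i; apply/negPn/negP => Hxy.
have := xmin _ (covcell_midpoint Cx Cy); apply/negP; rewrite -ltnNge.
rewrite /argmax_weight (bigD1 i) //= [X in (_ < X)%N](bigD1 i) //= -addSn.
rewrite !covcell_argmaxsetI //; apply: leq_add; first exact/proper_card/properIl.
by apply: leq_sum => l _; rewrite covcell_argmaxsetI // subset_leq_card ?subsetIl.
Qed.

Lemma covcell_eq_argmax_cell : (exists x, covcell V S x) ->
  exists x, covcell V S = fun y => argmax_cell V x y /\ Hyp y.
Proof.
case/(ex_minimizer argmax_weight) => x Cx /(covcell_min_weight Cx) xleast.
exists x; apply: functional_extensionality => y; apply: propositional_extensionality.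
split=> [Cy|[xy Hy]]; first by split; [apply: xleast | case: Cy].
by split=> // i; apply: subset_trans (xy i); case: Cx => _.
Qed.

End CovectorCells.

Section ArgmaxCells.
Variables (R : realFieldType) (m n : nat) (V : 'M[R]_(m, n)).

Lemma argmaxset_subr_const x a i : argmaxset V (x - const_mx a) i = argmaxset V x i.
Proof.
apply/setP => j; apply/argmaxsetP/argmaxsetP => H k; have := H k;
  by rewrite !mxE ![_ - a - _]addrAC lerD2r.
Qed.

Hypothesis n_gt0 : (0 < n)%N.

Lemma Hyp_subr_mean (x : 'rV[R]_n) : Hyp (x - const_mx ((\sum_j x 0 j) / n%:R)).
Proof.
rewrite /Hyp; under eq_bigr do rewrite !mxE.
rewrite sumrB sumr_const card_ord -[(_ / _) *+ n]mulr_natr divfK ?subrr //.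
by rewrite pnatr_eq0 -lt0n.
Qed.

Lemma covdec_argmax_cell x : covdec V (fun y => argmax_cell V x y /\ Hyp y).
Proof.
exists [ffun i => argmaxset V x i]; split.
  move=> i; rewrite ffunE; apply/set0Pn.
  by exists [arg max_(j > Ordinal n_gt0) (x 0 j - V i j)]%O; apply: arg_max_argmaxset.
split.
  exists (x - const_mx ((\sum_j x 0 j) / n%:R)); split; first exact: Hyp_subr_mean.
  by move=> i; rewrite ffunE argmaxset_subr_const.
apply: functional_extensionality => y; apply: propositional_extensionality.
split=> [[sub Hy]|[Hy sub]]; split=> // i; by move: (sub i); rewrite ffunE.
Qed.

End ArgmaxCells.

Theorem lemma2p13 (R : realFieldType) (m n : nat) (V : 'M[R]_(m, n)) (w : 'I_m -> R) :
  (0 < n)%N -> (forall i, 0 < w i) ->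
  NC (fVw_coef V (fun _ => 1)) (fVw_exp (fun _ => 1))
    = NC (fVw_coef V w) (fVw_exp w)
  /\ covdec V = NCbar (fVw_coef V w) (fVw_exp w).
Proof.
move=> n_gt0 w_gt0; rewrite /NCbar (NC_fVw V w_gt0) (NC_fVw V (fun _ => ltr01)).
split=> //.
apply: functional_extensionality => D; apply: propositional_extensionality.
split=> [[S [S_neq0 [Cne ->]]]|[_ [[x ->] ->]]]; last exact: covdec_argmax_cell n_gt0 x.
have [x ->] := covcell_eq_argmax_cell S_neq0 Cne.
by exists (argmax_cell V x); split; first exists x.
Qed.
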